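(* Let $p=a/b$ with $a,b$ positive coprime integers and $b\not\equiv 0\pmod 4$, and set $k'=b$ if $b$ is even, $k'=2b$ if $b$ is odd. Let $(\Delta_L^{(m)})_{m\ge 1}$ satisfy $\Delta_L^{(m+1)}=\Delta_L^{(m)}+1+2p-2\lceil\Delta_L^{(m)}\rceil$ for all $m\ge1$, with $0<|\Delta_L^{(1)}|<1/k'$. Writing $d(t)=\left|\left((t+\tfrac12)\bmod 1\right)-\tfrac12\right|$ for the distance from $t\in\mathbb{R}$ to the nearest integer, we have $$d\big(\Delta_L^{(m)}\big)>\frac{1}{k'}\quad\text{for all } m\in\{2,\dots,k'/2\}\cup\{k'/2+2,\dots,k'\},$$ and $$d\big(\Delta_L^{(k'/2+1)}\big)<\frac{1}{k'} .$$
   Context: $\lceil\cdot\rceil$ denotes the ceiling function and $t\bmod 1\in[0,1)$ the fractional part. Note $k'$ is always even. *)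

From Stdlib Require Export Reals Lra Lia Arith.
Open Scope R_scope.

(* Ceiling: ceil x is the least integer >= x.
   Stdlib's [up y] is the unique integer with y < up y <= y + 1,
   so ceil x = - floor(-x) = 1 - up(-x). *)
Definition ceilR (x : R) : Z := (1 - up (- x))%Z.

(* fractional part t mod 1 in [0,1): t - floor t  (Stdlib: frac_part = x - Int_part x) *)
Definition fracR (t : R) : R := t - IZR (up t - 1).

Definition dist_int (t : R) : R := Rabs (fracR (t + 1/2) - 1/2).

Definition kprime (b : nat) : nat := if Nat.even b then b else (2 * b)%nat.

(* Modulo 2 the recursion is a rotation: since the ceiling is an integer,
   D(1+j) = D(1) + j(1 + 2p) + (even integer).  Write 1 + 2p = q/n with
   k' = 2n and gcd(q, n) = 1 (q = n + a if b = 2n, q = b + 2a if b is odd).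
   The offset j q/n is an integer exactly when n divides j, i.e. for j = n in
   the range 1 <= j < 2n; otherwise it lies at distance at least 1/n from every
   integer, and the initial perturbation |D(1)| < 1/(2n) cannot close that
   gap. *)
From Stdlib Require Import Reals Lra Lia Arith ZArith Znumtheory.
Open Scope R_scope.

Lemma dist_int_attained t :
  exists N : Z, dist_int t = Rabs (t - IZR N) /\ -1/2 <= t - IZR N < 1/2.
Proof.
  unfold dist_int, fracR. exists (up (t + 1/2) - 1)%Z.
  destruct (archimed (t + 1/2)). rewrite minus_IZR. split.
  - f_equal; ring.
  - lra.
Qed.

Lemma dist_int_le_Rabs t K : dist_int t <= Rabs (t - IZR K).
Proof.
  destruct (dist_int_attained t) as [N [-> HN]].
  destruct (Z.eq_dec N K) as [->|neq]; [lra|].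
  assert (HNK : (N - K >= 1 \/ N - K <= -1)%Z) by lia.
  destruct HNK as [H|H]; [apply IZR_ge in H | apply IZR_le in H]; rewrite minus_IZR in H;
    unfold Rabs; destruct Rcase_abs; destruct Rcase_abs; lra.
Qed.

Lemma dist_int_gt t e : (forall K, Rabs (t - IZR K) > e) -> dist_int t > e.
Proof. intros H. destruct (dist_int_attained t) as [N [-> _]]. apply H. Qed.

Lemma dist_int_add_int_lt x K e : Rabs x < e -> dist_int (x + IZR K) < e.
Proof.
  intros Hx. eapply Rle_lt_trans; [apply (dist_int_le_Rabs _ K)|].
  now replace (x + IZR K - IZR K) with x by ring.
Qed.

Lemma dist_int_add_frac_gt (n : nat) x w :
  (0 < n)%nat -> Rabs x < 1 / (2 * INR n) -> ~ (Z.of_nat n | w)%Z ->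
  dist_int (x + IZR w / INR n) > 1 / (2 * INR n).
Proof.
  intros Hn0 Hx Hw. assert (Hn : 0 < INR n) by (apply lt_0_INR; lia).
  apply dist_int_gt. intros K.
  set (v := (w - Z.of_nat n * K)%Z).
  replace (x + IZR w / INR n - IZR K) with (x + IZR v / INR n)
    by (unfold v; rewrite minus_IZR, mult_IZR, <- INR_IZR_INZ; field; lra).
  assert (Hv : 1 <= Rabs (IZR v)).
  { rewrite <- abs_IZR. apply IZR_le.
    assert (v <> 0%Z) by (intros Hv0; apply Hw; exists K; unfold v in Hv0; lia). lia. }
  assert (Hvn : 1 / INR n <= Rabs (IZR v / INR n)).
  { unfold Rdiv. rewrite Rabs_mult, Rabs_inv, (Rabs_right (INR n)) by lra.
    apply Rmult_le_compat_r; [apply Rlt_le, Rinv_0_lt_compat|]; lra. }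
  assert (Hhalf : 1 / (2 * INR n) = 1 / INR n / 2) by (field; lra).
  pose proof (Rabs_triang (x + IZR v / INR n) (- x)) as Htri.
  replace (x + IZR v / INR n + - x) with (IZR v / INR n) in Htri by ring.
  rewrite Rabs_Ropp in Htri. lra.
Qed.

Lemma recursion_mod_2_orbit (D : nat -> R) r :
  (forall m, (1 <= m)%nat -> exists z : Z, D (S m) = D m + r + 2 * IZR z) ->
  forall j, exists z : Z, D (S j) = D 1%nat + INR j * r + 2 * IZR z.
Proof.
  intros Hstep j. induction j as [|j [z IH]].
  - exists 0%Z. simpl. ring.
  - destruct (Hstep (S j)) as [z' Hz']; [lia|].
    exists (z + z')%Z. rewrite Hz', IH, S_INR, plus_IZR. ring.
Qed.

Section Rotation.

Variables (n : nat) (q : Z) (D : nat -> R).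
Hypothesis n_gt0 : (0 < n)%nat.
Hypothesis q_coprime : rel_prime (Z.of_nat n) q.
Hypothesis D_step : forall m, (1 <= m)%nat ->
  exists z : Z, D (S m) = D m + IZR q / INR n + 2 * IZR z.
Hypothesis D1_small : Rabs (D 1%nat) < 1 / (2 * INR n).

Lemma rotation_orbit j :
  exists z : Z, D (S j) = D 1%nat + IZR (Z.of_nat j * q + 2 * Z.of_nat n * z) / INR n.
Proof.
  assert (Hn : 0 < INR n) by (apply lt_0_INR; lia).
  destruct (recursion_mod_2_orbit D _ D_step j) as [z ->].
  exists z. rewrite plus_IZR, !mult_IZR, <- !INR_IZR_INZ. field. lra.
Qed.

Lemma rotation_dist_far j :
  ~ (Z.of_nat n | Z.of_nat j)%Z -> dist_int (D (S j)) > 1 / (2 * INR n).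
Proof.
  intros Hj. destruct (rotation_orbit j) as [z ->].
  apply dist_int_add_frac_gt; [exact n_gt0 | exact D1_small |].
  intros Hw. apply Hj, (Gauss _ q); [|exact q_coprime].
  rewrite Z.mul_comm.
  replace (Z.of_nat j * q)%Z
    with (Z.of_nat j * q + 2 * Z.of_nat n * z - Z.of_nat n * (2 * z))%Z by ring.
  apply Z.divide_sub_r; [exact Hw | apply Z.divide_factor_l].
Qed.

Lemma rotation_dist_near j :
  (Z.of_nat n | Z.of_nat j)%Z -> dist_int (D (S j)) < 1 / (2 * INR n).
Proof.
  assert (Hn : 0 < INR n) by (apply lt_0_INR; lia).
  intros [t Ht]. destruct (rotation_orbit j) as [z ->].
  replace (IZR (Z.of_nat j * q + 2 * Z.of_nat n * z) / INR n) with (IZR (t * q + 2 * z)).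
  - now apply dist_int_add_int_lt.
  - rewrite Ht, !plus_IZR, !mult_IZR, <- INR_IZR_INZ. field. lra.
Qed.

End Rotation.

Lemma not_divide_strictly_between (n j : nat) :
  (0 < j < 2 * n)%nat -> j <> n -> ~ (Z.of_nat n | Z.of_nat j)%Z.
Proof.
  intros Hj Hjn [t Ht].
  assert (t <= 0 \/ t = 1 \/ 2 <= t)%Z as [Ht'|[->|Ht']] by lia; nia.
Qed.

Lemma rel_prime_of_Nat_gcd a b :
  (0 < a)%nat -> Nat.gcd a b = 1%nat -> rel_prime (Z.of_nat a) (Z.of_nat b).
Proof.
  intros Ha Hab. destruct (Nat.gcd_bezout_pos a b Ha) as [u [v Huv]].
  rewrite Hab in Huv. apply bezout_rel_prime.
  apply (Bezout_intro _ _ _ (Z.of_nat u) (- Z.of_nat v)). nia.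
Qed.

Lemma kprime_rotation a b :
  (0 < a)%nat -> (0 < b)%nat -> Nat.gcd a b = 1%nat ->
  exists (n : nat) (q : Z), (0 < n)%nat /\ kprime b = (2 * n)%nat /\
    1 + 2 * (INR a / INR b) = IZR q / INR n /\ rel_prime (Z.of_nat n) q.
Proof.
  intros Ha Hb Hab. pose proof (rel_prime_of_Nat_gcd a b Ha Hab) as Hcop.
  unfold kprime. destruct (Nat.Even_or_Odd b) as [[n ->]|[n Hodd]].
  - assert (Hn : 0 < INR n) by (apply lt_0_INR; lia).
    rewrite Nat.even_mul. exists n, (Z.of_nat n + Z.of_nat a)%Z.
    split; [lia|]. split; [reflexivity|]. split.
    + rewrite plus_IZR, <- !INR_IZR_INZ, mult_INR. simpl (INR 2). field. lra.
    + apply Zgcd_1_rel_prime. rewrite Z.add_comm, Z.gcd_add_diag_r.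
      apply Zgcd_1_rel_prime, (rel_prime_div _ _ _ (rel_prime_sym _ _ Hcop)).
      exists 2%Z. lia.
  - assert (Hb' : 0 < INR b) by (apply lt_0_INR; lia).
    replace (Nat.even b) with false
      by (subst b; rewrite Nat.add_comm, Nat.even_add_mul_2; reflexivity).
    exists b, (Z.of_nat b + 2 * Z.of_nat a)%Z.
    split; [lia|]. split; [lia|]. split.
    + rewrite plus_IZR, mult_IZR, <- !INR_IZR_INZ. field. lra.
    + apply Zgcd_1_rel_prime. rewrite Z.add_comm, Z.gcd_add_diag_r.
      apply Zgcd_1_rel_prime, rel_prime_mult; [|now apply rel_prime_sym].
      apply rel_prime_sym, prime_rel_prime; [exact prime_2|].
      intros [t Ht]. lia.
Qed.

Theorem lemma3 (a b : nat) (D : nat -> R)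
  (ha : (0 < a)%nat) (hb : (0 < b)%nat) (hab : Nat.gcd a b = 1%nat)
  (hb4 : (b mod 4 <> 0)%nat)
  (hrec : forall m : nat, (1 <= m)%nat ->
     D (S m) = D m + 1 + 2 * (INR a / INR b) - 2 * IZR (ceilR (D m)))
  (h1 : 0 < Rabs (D 1%nat) < 1 / INR (kprime b)) :
  (forall m : nat,
     ((2 <= m <= kprime b / 2)%nat \/ (kprime b / 2 + 2 <= m <= kprime b)%nat) ->
     dist_int (D m) > 1 / INR (kprime b)) /\
  dist_int (D (kprime b / 2 + 1)%nat) < 1 / INR (kprime b).
Proof.
  destruct (kprime_rotation a b ha hb hab) as (n & q & Hn & Hk & Hstep & Hcop).
  rewrite Hk in h1 |- *.
  replace (2 * n / 2)%nat with n by (rewrite Nat.mul_comm, Nat.div_mul; lia).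
  replace (INR (2 * n)) with (2 * INR n) in * by (rewrite mult_INR; simpl; ring).
  assert (D_step : forall m, (1 <= m)%nat ->
            exists z : Z, D (S m) = D m + IZR q / INR n + 2 * IZR z).
  { intros m Hm. exists (- ceilR (D m))%Z. rewrite hrec, opp_IZR, <- Hstep by exact Hm. ring. }
  split.
  - intros [|j] Hj; [lia|].
    apply (rotation_dist_far n q D Hn Hcop D_step (proj2 h1)).
    apply not_divide_strictly_between; lia.
  - rewrite Nat.add_1_r.
    apply (rotation_dist_near n q D Hn D_step (proj2 h1)).
    exists 1%Z. lia.
Qed.
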